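(* For all integers $1\le k\le n$, $\hat E_{k,n}(q)=\hat E_{n+1-k,n}(q)$.
   Context: Place $1,\dots,n$ clockwise on a circle. Distinct $p_1,\dots,p_m$ are in clockwise cyclic order if $(p_2-p_1)\bmod n<\dots<(p_m-p_1)\bmod n$ (residues in $\{0,\dots,n-1\}$). For $\pi\in S_n$ (fixed points regarded as ''counterclockwise loops''), an ordered pair $(i,j)$, $i\ne j$, is aligned if $\pi(j)\ne j$, the entries of $(i,\pi(i),\pi(j),j)$ are pairwise distinct except that possibly $i=\pi(i)$, and the distinct entries in this order are in clockwise cyclic order. An alignment is an unordered pair $\{i,j\}$ with $(i,j)$ or $(j,i)$ aligned; $\mathrm{al}(\pi)$ is their number. A weak excedence of $\pi$ is an $i$ with $\pi(i)\ge i$. $E_{k,n}(q)=\sum q^{k(n-k)-\mathrm{al}(\pi)}$ over $\pi\in S_n$ with exactly $k$ weak excedences, and $\hat E_{k,n}(q)=q^{k-n}E_{k,n}(q)$. *)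

(* Points 1..n of the circle are encoded as 'I_n (value v <-> point v+1);
   the cyclic-order condition depends only on differences mod n, so the shift is harmless. *)
From mathcomp Require Import all_boot all_order all_algebra all_fingroup.
Set Implicit Arguments. Unset Strict Implicit. Unset Printing Implicit Defensive.

Definition cdiff (n : nat) (p q : 'I_n) : nat := (q + n - p) %% n.

(* distinct p_1,...,p_m in clockwise cyclic order:
   (p_2-p_1) mod n < ... < (p_m-p_1) mod n *)
Definition cw_ordered (n : nat) (s : seq 'I_n) : bool :=
  match s with
  | [::] => true
  | p1 :: rest => uniq s && sorted ltn [seq cdiff p1 p | p <- rest]
  end.

Definition aligned (n : nat) (pi : 'S_n) (i j : 'I_n) : bool :=
  [&& i != j, pi j != j &
      cw_ordered (if pi i == i then [:: i; pi j; j] else [:: i; pi i; pi j; j])].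

Definition al (n : nat) (pi : 'S_n) : nat :=
  #|[set ij : 'I_n * 'I_n | (ij.1 < ij.2) &&
        (aligned pi ij.1 ij.2 || aligned pi ij.2 ij.1)]|.

Definition wex (n : nat) (pi : 'S_n) : nat := #|[set i : 'I_n | i <= pi i]|.

(* Ehat_{k,n}(q) = q^(k-n) * sum_{pi, wex pi = k} q^(k(n-k) - al pi) is a Laurent
   polynomial in q; Ehat_coef n k e is its coefficient of q^e (e : int). *)
Definition Ehat_coef (n k : nat) (e : int) : nat :=
  #|[set pi : 'S_n | (wex pi == k) &&
       ((k%:Z - n%:Z) + ((k * (n - k))%:Z - (al pi)%:Z) == e)%R]|.

From mathcomp Require Import all_boot all_order all_algebra all_fingroup zify.
Set Implicit Arguments. Unset Strict Implicit. Unset Printing Implicit Defensive.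
Import GRing.Theory.

(* Let s be the rotation i |-> i+1 of the circle.  The bijection p |-> (s o p)^-1 of S_n
   preserves alignments: (i, j) is aligned for p iff (s p(j), s p(i)) is aligned for
   (s o p)^-1, because the clockwise arrangement (i, p i, p j, j), read from p j, stays
   clockwise when p i and p j are advanced by one step.  It complements weak excedences:
   through y |-> s p(y), the weak excedences of (s o p)^-1 are the y with p(y)+1 <= y
   (mod n), that is the non-excedences of p together with p^-1(n); so k becomes n+1-k.
   Finally k - n + k(n-k) = k(n+1-k) - n is invariant under k |-> n+1-k. *)

Lemma card_sym_pairs n (r : rel 'I_n) : irreflexive r -> symmetric r ->
  #|[set ij : 'I_n * 'I_n | r ij.1 ij.2]| =
  (#|[set ij : 'I_n * 'I_n | (ij.1 < ij.2) && r ij.1 ij.2]|).*2.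
Proof.
move=> r_irr r_sym.
set A := [set ij : 'I_n * 'I_n | (ij.1 < ij.2) && r ij.1 ij.2].
pose swap (ij : 'I_n * 'I_n) := (ij.2, ij.1).
have swap_inj : injective swap by move=> [? ?] [? ?] [-> ->].
have -> : [set ij | r ij.1 ij.2] = A :|: swap @^-1: A.
  apply/setP => -[i j]; rewrite !inE /= [r j i]r_sym.
  by case: ltngtP => [||/val_inj->] /=; rewrite ?orbF ?r_irr.
have AI : A :&: swap @^-1: A = set0.
  by apply/setP => -[i j]; rewrite !inE /=; case: ltngtP; rewrite ?andbF.
by rewrite cardsU AI cards0 subn0 card_preimset // addnn.
Qed.

Lemma Ehat_exponentE n k : k <= n ->
  (k%:Z - n%:Z + (k * (n - k))%:Z = (k * (n.+1 - k))%:Z - n%:Z)%R.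
Proof. by move=> kn; rewrite subSn // mulnS PoszD addrAC. Qed.

Section Circle.

Variable m : nat.
Local Notation n := m.+1.
(* 'I_n is only a Z-module here; Zp1 is its generator 1 mod n. *)
Local Notation succ x := (x + Zp1)%R.
Implicit Types (a b c d p q t x y z w : 'I_n) (pi : 'S_n).

Lemma cdiffE p q : cdiff p q = val (q - p)%R.
Proof. by rewrite /cdiff /= modnDmr addnBA // ltnW. Qed.

Lemma cdiff_cases p q :
  (p <= q /\ cdiff p q = q - p) \/ (q < p /\ cdiff p q = q + n - p).
Proof.
rewrite /cdiff; case: leqP => pq; [left | right]; split=> //.
  by rewrite -addnBAC // modnDr modn_small // ltn_subLR ?ltn_addl.
by rewrite modn_small //; lia.
Qed.

Lemma val_succ y : (y.+1 < n /\ succ y = y.+1 :> nat) \/ (y.+1 = n /\ succ y = 0%R).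
Proof.
have [y_lt | y_max] : y.+1 < n \/ y.+1 = n by have := ltn_ord y; lia.
  by left; rewrite /= modnDmr addn1 modn_small.
by right; split=> //; apply: val_inj; rewrite /= modnDmr addn1 y_max modnn.
Qed.

Lemma cw_ordered_translate t s : cw_ordered [seq (p + t)%R | p <- s] = cw_ordered s.
Proof.
case: s => [|p s] //=.
rewrite (mem_map (addIr t)) (map_inj_uniq (addIr t)) -map_comp.
congr (_ && sorted _ _); apply: eq_map => q /=.
by rewrite !cdiffE [(p + t)%R]addrC addrKA.
Qed.

Lemma cw_ordered3 a b c : cw_ordered [:: a; b; c] =
  [&& a != b :> nat, a != c :> nat, b != c :> nat & cdiff a b < cdiff a c].
Proof. by rewrite /= !inE !negb_or !val_eqE !andbT -!andbA. Qed.

Lemma cw_ordered4 a b c d : cw_ordered [:: a; b; c; d] =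
  [&& a != b :> nat, a != c :> nat, a != d :> nat, b != c :> nat,
      b != d :> nat, c != d :> nat, cdiff a b < cdiff a c & cdiff a c < cdiff a d].
Proof. by rewrite /= !inE !negb_or !val_eqE !andbT -!andbA. Qed.

Definition aligned4 x y z w : bool :=
  [&& x != w, z != w & cw_ordered (if y == x then [:: x; z; w] else [:: x; y; z; w])].

Lemma alignedE pi i j : aligned pi i j = aligned4 i (pi i) (pi j) j.
Proof. by []. Qed.

Lemma aligned4_translate t x y z w :
  aligned4 (x + t)%R (y + t)%R (z + t)%R (w + t)%R = aligned4 x y z w.
Proof.
rewrite /aligned4 !(inj_eq (addIr t)).
by case: ifP => _; rewrite -[in RHS](cw_ordered_translate t).
Qed.

Lemma cdiff0 q : cdiff 0%R q = q.
Proof. by rewrite cdiffE subr0. Qed.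

Lemma aligned4_succ0 y z w : (0%R == w) = (y == z) ->
  aligned4 0%R y z w = aligned4 (succ z) w 0%R (succ y).
Proof.
have ordE (a b : 'I_n) : (a == b) = (a == b :> nat) by [].
have val0 : nat_of_ord (0%R : 'I_n) = 0 by [].
rewrite /aligned4 !ordE; have := ltn_ord w; have := ltn_ord z; have := ltn_ord y.
have := cdiff_cases (succ z) w; have := cdiff_cases (succ z) 0%R.
have := cdiff_cases (succ z) (succ y).
case: ifP; case: ifP; rewrite ?cw_ordered3 ?cw_ordered4 ?cdiff0 val0.
all: have [[? ->]|[? ->]] := val_succ y; have [[? ->]|[? ->]] := val_succ z.
all: rewrite ?cdiff0 ?val0; lia.
Qed.

(* With (x, y, z, w) = (i, p i, p j, j): the loop y = x on the left becomes the
   adjacency (x, x+1) on the right, and the adjacency w = z+1 becomes a loop. *)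
Lemma aligned4_succ x y z w : (x == w) = (y == z) ->
  aligned4 x y z w = aligned4 (succ z) w x (succ y).
Proof.
move=> xw_yz; rewrite -(aligned4_translate (- x)%R) -[RHS](aligned4_translate (- x)%R).
rewrite subrr !(addrAC _ Zp1); apply: aligned4_succ0.
by rewrite -(subrr x) !(inj_eq (addIr _)).
Qed.

Definition rot : 'S_n := perm (addIr Zp1).

Definition dual pi : 'S_n := ((pi * rot)^-1)%g.

Lemma mul_rotE pi i : (pi * rot)%g i = succ (pi i).
Proof. by rewrite permM permE. Qed.

Lemma dual_mul_rot pi i : dual pi ((pi * rot)%g i) = i.
Proof. exact: permK. Qed.

Lemma dual_inj : injective dual.
Proof. by move=> pi1 pi2 /invg_inj/mulIg. Qed.

Lemma aligned_dual pi i j :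
  aligned (dual pi) ((pi * rot)%g j) ((pi * rot)%g i) = aligned pi i j.
Proof.
rewrite !alignedE !dual_mul_rot !mul_rotE [RHS]aligned4_succ //.
by rewrite (inj_eq perm_inj).
Qed.

Definition alignment_rel pi : rel 'I_n := fun i j => aligned pi i j || aligned pi j i.

Lemma double_al pi : (al pi).*2 = #|[set ij : 'I_n * 'I_n | alignment_rel pi ij.1 ij.2]|.
Proof.
symmetry; apply: (card_sym_pairs (r := alignment_rel pi)) => [i | i j].
  by rewrite /alignment_rel /aligned eqxx.
exact: orbC.
Qed.

Lemma al_dual pi : al (dual pi) = al pi.
Proof.
apply: double_inj; rewrite !double_al.
pose g ij := ((pi * rot)%g ij.2, (pi * rot)%g ij.1).
have g_inj : injective g by move=> [? ?] [? ?] [/perm_inj -> /perm_inj ->].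
rewrite -(card_preimset _ g_inj); apply: eq_card => -[i j].
by rewrite !inE /alignment_rel /= !aligned_dual orbC.
Qed.

Lemma wex_dual pi : wex (dual pi) = n.+1 - wex pi.
Proof.
set W := [set y : 'I_n | succ (pi y) <= y].
set X := [set y : 'I_n | y <= pi y].
have -> : wex (dual pi) = #|W|.
  rewrite /wex -(card_preimset _ (@perm_inj _ (pi * rot)%g)).
  by apply: eq_card => y; rewrite !inE dual_mul_rot mul_rotE.
have WUX : W :|: X = setT.
  by apply/setP => y; rewrite !inE; have [[_ ->]|[_ ->]] := val_succ (pi y) => /=; lia.
have WIX : W :&: X = pi @^-1: [set ord_max].
  apply/setP => y; rewrite !inE -val_eqE; have := ltn_ord y.
  by have [[? ->]|[? ->]] := val_succ (pi y) => /=; lia.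
have := cardsUI W X.
rewrite WUX WIX card_preimset ?cards1 ?cardsT ?card_ord; last exact: perm_inj.
by rewrite /wex -/X; lia.
Qed.

End Circle.

Theorem mainTheorem10 (n k : nat) : 1 <= k <= n ->
  forall e : int, Ehat_coef n k e = Ehat_coef n (n.+1 - k) e.
Proof.
case: n => [|m] /andP[k_gt0 k_le] e; first by case: k k_gt0 k_le.
rewrite /Ehat_coef -(card_preimset _ (@dual_inj m)); apply: eq_card => pi.
have wex_le : wex pi <= m.+1 by rewrite -{2}(card_ord m.+1) max_card.
have k'_le : m.+2 - k <= m.+1 by lia.
rewrite !inE wex_dual al_dual !addrA !Ehat_exponentE // subKn ?(leqW k_le) // mulnC.
congr (_ && _); apply/eqP/eqP; lia.
Qed.
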